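(* Let $(X,d)$ be an infinite compact metric space and $f_{1,\infty}=\{f_n\}_{n\ge1}$ a sequence of maps $X\to X$ each of which is an isometry. Then $(X,f_{1,\infty})$ does not satisfy Banks's condition.
   Context: Write $f_1^n=f_n\circ\cdots\circ f_1$. $(X,f_{1,\infty})$ satisfies Banks's condition if for any three non-empty open sets $U,V,W\subseteq X$ there is $n\in\mathbb{N}$ with $f_1^n(U)\cap V\neq\emptyset$ and $f_1^n(U)\cap W\ne\emptyset$. *)

From Stdlib Require Import Reals List.
Open Scope R_scope.

Definition is_metric {X : Type} (d : X -> X -> R) : Prop :=
  (forall x y, 0 <= d x y) /\
  (forall x y, d x y = 0 <-> x = y) /\
  (forall x y, d x y = d y x) /\
  (forall x y z, d x z <= d x y + d y z).

Definition metric_open {X : Type} (d : X -> X -> R) (U : X -> Prop) : Prop :=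
  forall x, U x -> exists eps, 0 < eps /\ forall y, d x y < eps -> U y.

Definition metric_compact {X : Type} (d : X -> X -> R) : Prop :=
  forall (I : Type) (U : I -> X -> Prop),
    (forall i, metric_open d (U i)) ->
    (forall x, exists i, U i x) ->
    exists l : list I, forall x, exists i, In i l /\ U i x.

Definition infinite_type (X : Type) : Prop :=
  ~ exists l : list X, forall x : X, In x l.

Definition isometry {X : Type} (d : X -> X -> R) (f : X -> X) : Prop :=
  forall x y, d (f x) (f y) = d x y.

(* Non-autonomous iterate: f_1^n = f_n o ... o f_1 (f is indexed from 1;
   f 0 is never used); f_1^0 = id. *)
Fixpoint f_iter {X : Type} (f : nat -> X -> X) (n : nat) : X -> X :=
  match n with
  | O => fun x => x
  | S m => fun x => f (S m) (f_iter f m x)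
  end.

Definition banks_condition {X : Type} (d : X -> X -> R) (f : nat -> X -> X) : Prop :=
  forall U V W : X -> Prop,
    metric_open d U -> (exists x, U x) ->
    metric_open d V -> (exists x, V x) ->
    metric_open d W -> (exists x, W x) ->
    exists n : nat, (1 <= n)%nat /\
      (exists x, U x /\ V (f_iter f n x)) /\
      (exists x, U x /\ W (f_iter f n x)).

(** Banks's condition asks a single iterate [f_1^n] to stretch one open set
    across two others.  An isometry (more generally, any non-expanding map)
    cannot do this: take distinct points [p, q] at distance [D], let [U] be the
    ball of radius [D/8] about [p], and [V], [W] the balls of radius [D/4] about
    [p] and [q].  The image of [U] has diameter at most [D/4], while points of
    [V] and [W] are more than [D/2] apart. *)
From Stdlib Require Import Reals List Lra Lia Classical.
Open Scope R_scope.

Lemma infinite_type_two_points (X : Type) :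
  infinite_type X -> exists p q : X, p <> q.
Proof.
  intro Hinf. apply NNPP. intro Hall. apply Hinf.
  destruct (classic (exists x : X, True)) as [[p _] | Hempty].
  - exists (p :: nil). intro x. left. apply NNPP. intro Hpx.
    apply Hall. exists p, x. exact Hpx.
  - exists nil. intro x. apply Hempty. exists x. exact I.
Qed.

Lemma f_iter_isometry {X : Type} (d : X -> X -> R) (f : nat -> X -> X) :
  (forall n : nat, (1 <= n)%nat -> isometry d (f n)) ->
  forall n, isometry d (f_iter f n).
Proof.
  intros Hiso n. induction n as [| n IH]; intros x y; simpl; [reflexivity |].
  rewrite Hiso by lia. apply IH.
Qed.

Section MetricBalls.

Variables (X : Type) (d : X -> X -> R).
Hypothesis Hd : is_metric d.

Lemma metric_ball_open (c : X) (r : R) : metric_open d (fun y => d c y < r).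
Proof.
  destruct Hd as [_ [_ [_ Htri]]].
  intros y Hy. exists (r - d c y). split; [lra |].
  intros z Hz. pose proof (Htri c y z). lra.
Qed.

Lemma metric_ball_inhabited (c : X) (r : R) :
  0 < r -> exists y, d c y < r.
Proof.
  destruct Hd as [_ [Hzero _]].
  intro Hr. exists c. rewrite (proj2 (Hzero c c) eq_refl). exact Hr.
Qed.

Lemma not_banks_condition_nonexpanding (f : nat -> X -> X) :
  (exists p q : X, p <> q) ->
  (forall n x y, d (f_iter f n x) (f_iter f n y) <= d x y) ->
  ~ banks_condition d f.
Proof.
  intros [p [q Hpq]] Hnonexp Hbanks.
  destruct Hd as [Hpos [Hzero [Hsym Htri]]].
  set (D := d p q).
  assert (HD : 0 < D).
  { destruct (Hpos p q) as [Hlt | Heq]; [exact Hlt |].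
    exfalso. apply Hpq, Hzero. symmetry. exact Heq. }
  destruct (Hbanks (fun y => d p y < D / 8) (fun y => d p y < D / 4)
                   (fun y => d q y < D / 4))
    as [n [_ [[x [Ux Vx]] [y [Uy Wy]]]]];
    try apply metric_ball_open; try apply metric_ball_inhabited; try lra.
  set (gx := f_iter f n x). set (gy := f_iter f n y).
  fold gx in Vx. fold gy in Wy.
  assert (Hxy : d gx gy <= d x y) by apply Hnonexp.
  pose proof (Htri x p y). pose proof (Hsym x p).
  pose proof (Htri p gx q). pose proof (Htri gx gy q). pose proof (Hsym gy q).
  unfold D in *. lra.
Qed.

End MetricBalls.

Theorem lemma4p5 (X : Type) (d : X -> X -> R) (f : nat -> X -> X)
  (Hd : is_metric d) (Hcpt : metric_compact d) (Hinf : infinite_type X)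
  (Hiso : forall n : nat, (1 <= n)%nat -> isometry d (f n)) :
  ~ banks_condition d f.
Proof.
  apply not_banks_condition_nonexpanding.
  - exact Hd.
  - exact (infinite_type_two_points X Hinf).
  - intros n x y. rewrite (f_iter_isometry d f Hiso n). apply Rle_refl.
Qed.
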